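(* Let $\mathfrak g$ be a finite-dimensional Lie algebra over a field $k$ of characteristic zero and let $(A,\cdot)$ be an LR-structure on $\mathfrak g$. Consider the statements: (a) all left multiplications $L(x)$, $x\in A$, are nilpotent; (b) all right multiplications $R(x)$, $x\in A$, are nilpotent; (c) $\mathfrak g$ is nilpotent. Then any two of (a), (b), (c) imply the third.
   Context: An LR-algebra is a vector space $A$ with a bilinear product $\cdot$ satisfying $x\cdot(y\cdot z)=y\cdot(x\cdot z)$ and $(x\cdot y)\cdot z=(x\cdot z)\cdot y$ for all $x,y,z\in A$. An LR-structure on a Lie algebra $\mathfrak g$ is an LR-algebra product $\cdot$ on the underlying vector space $A$ of $\mathfrak g$ such that $x\cdot y-y\cdot x=[x,y]$ for all $x,y$. $L(x)y=x\cdot y$ and $R(x)y=y\cdot x$. *)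

From HB Require Import structures.
From mathcomp Require Import all_boot all_order all_algebra.
Set Implicit Arguments. Unset Strict Implicit. Unset Printing Implicit Defensive.
Import GRing.Theory.
Local Open Scope ring_scope.

Section LR.
Variables (K : fieldType) (V : vectType K).

Definition bilinear_op (p : V -> V -> V) : Prop :=
  (forall (a : K) (x y z : V), p (a *: x + y) z = a *: p x z + p y z) /\
  (forall (a : K) (x y z : V), p x (a *: y + z) = a *: p x y + p x z).

Definition is_lie_bracket (br : V -> V -> V) : Prop :=
  [/\ bilinear_op br,
      (forall x, br x x = 0) &
      (forall x y z, br x (br y z) + br y (br z x) + br z (br x y) = 0)].

Definition is_LR_algebra (m : V -> V -> V) : Prop :=
  [/\ bilinear_op m,
      (forall x y z, m x (m y z) = m y (m x z)) &
      (forall x y z, m (m x y) z = m (m x z) y)].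

Definition is_LR_structure (br m : V -> V -> V) : Prop :=
  is_LR_algebra m /\ (forall x y, m x y - m y x = br x y).

Definition nilpotent_map (f : V -> V) : Prop :=
  exists n : nat, forall v, iter n f v = 0.

Definition Lmul (m : V -> V -> V) (x : V) : V -> V := fun y => m x y.
Definition Rmul (m : V -> V -> V) (x : V) : V -> V := fun y => m y x.

Definition iter_bracket (br : V -> V -> V) (xs : seq V) (y : V) : V :=
  foldr (fun x v => br x v) y xs.

(* g is nilpotent: the lower central series g^1 = g, g^{k+1} = [g, g^k]
   reaches 0, i.e. all iterated brackets of some fixed length vanish. *)
Definition lie_nilpotent (br : V -> V -> V) : Prop :=
  exists n : nat, forall (xs : seq V) (y : V), size xs = n -> iter_bracket br xs y = 0.

End LR.

From HB Require Import structures.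
From mathcomp Require Import all_boot all_order all_algebra zify.
Set Implicit Arguments. Unset Strict Implicit. Unset Printing Implicit Defensive.
Import GRing.Theory.
Local Open Scope ring_scope.

(* Two of the three properties (a) all L(x) nilpotent, (b) all R(x) nilpotent,
   (c) the Lie algebra g nilpotent imply the third, for any LR-structure on a
   finite-dimensional g.

   - (a) + (b) -> (c).  In an LR-algebra the L(x) commute with each other, and
     so do the R(x).  A family of commuting nilpotent maps depending linearly on
     x is uniformly nilpotent: products of N of them vanish.  An iterated
     bracket of length k expands into words of k letters L(x_i), R(x_i); by
     right (resp. left) commutativity such a word is a product of at least as
     many L's (resp. R's) as it has, so it vanishes once k >= N_L + N_R.
   - (a) + (c) -> (b) and (b) + (c) -> (a).  L(x) and R(x) are derivations of
     the bracket, hence preserve the lower central series g^j, while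
     R(x) - L(x) = -ad(x) maps g^j into g^(j+1).  So if L(x)^n = 0, then
     R(x)^n maps g^j into g^(j+1), and R(x)^(cn) = 0 when g^c = 0;
     symmetrically with L and R exchanged. *)

Section AdditiveSpan.
Variables (K : fieldType) (V : vectType K).

Lemma linear_fun0 (f : V -> V) : linear f -> f 0 = 0.
Proof. by move=> lf; have := zmod_morphism_linear lf 0 0; rewrite !subrr. Qed.

Lemma linear_funB (f : V -> V) : linear f -> forall u v, f (u - v) = f u - f v.
Proof. exact: zmod_morphism_linear. Qed.

Lemma linear_iter (f : V -> V) n : linear f -> linear (iter n f).
Proof. by move=> lf; elim: n => [|n IH] a u w //=; rewrite IH lf. Qed.

Inductive zspan (P : V -> Prop) : V -> Prop :=
  | zspan0 : zspan P 0
  | zspanB u v : zspan P u -> zspan P v -> zspan P (u - v)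
  | zspan_gen v : P v -> zspan P v.

Lemma zspanN P u : zspan P u -> zspan P (- u).
Proof. by move=> Pu; rewrite -sub0r; apply: zspanB => //; apply: zspan0. Qed.

Lemma zspanD P u v : zspan P u -> zspan P v -> zspan P (u + v).
Proof. by move=> Pu Pv; rewrite -[v]opprK; apply: zspanB => //; apply: zspanN. Qed.

Lemma zspan_linear_image (P Q : V -> Prop) (f : V -> V) :
  linear f -> (forall v, P v -> zspan Q (f v)) ->
  forall v, zspan P v -> zspan Q (f v).
Proof.
move=> lf fPQ v; elim=> [|u w _ Qu _ Qw|u /fPQ //].
- by rewrite linear_fun0 //; apply: zspan0.
- by rewrite linear_funB //; apply: zspanB.
Qed.

Lemma zspan_eq0 (P : V -> Prop) :
  (forall v, P v -> v = 0) -> forall v, zspan P v -> v = 0.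
Proof. by move=> P0 v; elim=> [|u w _ -> _ ->|u /P0] //; rewrite subr0. Qed.

End AdditiveSpan.

Section CommutingNilpotentFamily.
Variables (K : fieldType) (V : vectType K) (op : V -> V -> V).
Hypothesis op_linear_param : forall v, linear (op^~ v).
Hypothesis op_linear : forall x, linear (op x).
Hypothesis op_comm : forall x y v, op x (op y v) = op y (op x v).

Lemma linear_product xs : linear (fun z => foldr op z xs).
Proof. by elim: xs => [|x xs IH] a u w //=; rewrite IH op_linear. Qed.

Lemma product_comm xs g v : foldr op (op g v) xs = op g (foldr op v xs).
Proof. by elim: xs => [|x xs IH] //=; rewrite IH op_comm. Qed.

(* Adjoining a generator s with (op s)^n = 0 to a set S all of whose products
   of length N vanish: the product s^i * gs * l, with gs taken in span S and l
   in span (s :: S), vanishes once i + |gs| + |l| >= n + N.  By induction on l,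
   splitting its head as c s + g with g in span S. *)
Lemma product_vanish_adjoin s S n N :
  (forall v, iter n (op s) v = 0) ->
  (forall xs z, all (fun a => a \in <<S>>%VS) xs -> (N <= size xs)%N ->
     foldr op z xs = 0) ->
  forall l i gs z, all (fun a => a \in <<s :: S>>%VS) l ->
  all (fun a => a \in <<S>>%VS) gs -> (n + N <= i + size gs + size l)%N ->
  iter i (op s) (foldr op (foldr op z l) gs) = 0.
Proof.
have iter0 i : iter i (op s) 0 = 0 by apply/linear_fun0/linear_iter.
move=> s_nil S_nil; elim=> [|a l IH] i gs z /=.
- move=> _ gsS len; case: (leqP N (size gs)) => [gs_long | gs_short].
  + by rewrite S_nil.
  + have i_large : (n <= i)%N by lia.
    by rewrite -(subnK i_large) iterD s_nil iter0.
- case/andP=> aS lS gsS len.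
  have : a \in (<[s]> + <<S>>)%VS by rewrite -span_cons.
  case/memv_addP=> _ /vlineP[c ->] [g gS ->].
  rewrite op_linear_param linear_product (linear_iter _ (op_linear s)).
  rewrite product_comm -iterSr IH //; last by lia.
  rewrite -[op g _]/(foldr op _ [:: g]) -foldr_cat IH ?scaler0 ?add0r //.
  + by rewrite all_cat gsS /= gS.
  + by rewrite size_cat /=; lia.
Qed.

Hypothesis op_nilpotent : forall x, nilpotent_map (op x).

Lemma commuting_nilpotent_products :
  exists N, forall xs z, (N <= size xs)%N -> foldr op z xs = 0.
Proof.
(* Induction on a spanning sequence S, applied at the end to a basis of V. *)
suff span_bound : forall S, exists N, forall xs z,
    all (fun a => a \in <<S>>%VS) xs -> (N <= size xs)%N -> foldr op z xs = 0.
  have [N N_nil] := span_bound (vbasis fullv); exists N => xs z len.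
  apply: N_nil len; apply/allP => a _.
  by rewrite (span_basis (vbasisP fullv)) memvf.
elim=> [|s S [N S_nil]].
- exists 1%N => [[|a xs]] z //= /andP[a0 _] _.
  move: a0; rewrite span_nil memv0 => /eqP ->.
  exact: (linear_fun0 (op_linear_param _)).
- have [n s_nil] := op_nilpotent s; exists (n + N)%N => xs z xsS len.
  exact: (product_vanish_adjoin (i := 0) (gs := [::]) s_nil S_nil z xsS isT len).
Qed.

End CommutingNilpotentFamily.

Section LRStructure.
Variables (K : fieldType) (V : vectType K) (br m : V -> V -> V).
Hypothesis linearL : forall x, linear (m x).
Hypothesis linearR : forall x, linear (m^~ x).
Hypothesis left_comm : forall x y z, m x (m y z) = m y (m x z).
Hypothesis right_comm : forall x y z, m (m x y) z = m (m x z) y.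
Hypothesis commutator : forall x y, m x y - m y x = br x y.

Lemma linear_bracket x : linear (br x).
Proof.
move=> a u w; rewrite -!commutator linearL linearR.
by rewrite scalerBr opprD addrACA -scalerBr.
Qed.

(* Words in the letters L(x) = (true, x) and R(x) = (false, x). *)
Definition letter (p : bool * V) (v : V) : V :=
  if p.1 then m p.2 v else m v p.2.

Lemma linear_letter p : linear (letter p).
Proof. by case: p => [[] x]; [apply: linearL | apply: linearR]. Qed.

(* By right commutativity a word is a product of at least as many left
   multiplications as it has letters L. *)
Lemma word_as_left w z : exists xs z',
  (count fst w <= size xs)%N /\ foldr letter z w = foldr (Lmul m) z' xs.
Proof.
elim: w => [|[[] x] w [xs [z' [len IH]]]] /=; first by exists [::], z.
- by exists (x :: xs), z'; rewrite IH; split=> //=; lia.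
- rewrite IH; case: xs len IH => [|a xs] /= len _.
    by exists [:: z'], x; split=> //=; lia.
  by exists (m a x :: xs), z'; split=> //=; rewrite right_comm.
Qed.

(* Symmetrically, by left commutativity, with the letters R. *)
Lemma word_as_right w z : exists xs z',
  (count (predC fst) w <= size xs)%N /\ foldr letter z w = foldr (Rmul m) z' xs.
Proof.
elim: w => [|[[] x] w [xs [z' [len IH]]]] /=; first by exists [::], z.
- rewrite IH; case: xs len IH => [|a xs] /= len _.
    by exists [:: z'], x; split=> //=; lia.
  by exists (m x a :: xs), z'; split=> //=; rewrite /Rmul /= left_comm.
- by exists (x :: xs), z'; rewrite IH; split=> //=; lia.
Qed.

Lemma long_word_vanish NL NR :
  (forall xs z, (NL <= size xs)%N -> foldr (Lmul m) z xs = 0) ->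
  (forall xs z, (NR <= size xs)%N -> foldr (Rmul m) z xs = 0) ->
  forall w z, (NL + NR <= size w)%N -> foldr letter z w = 0.
Proof.
move=> L_nil R_nil w z len; have := count_predC fst w.
case: (leqP NL (count fst w)) => [manyL | fewL] count_w.
- by have [xs [z' [len' ->]]] := word_as_left w z; apply: L_nil; lia.
- by have [xs [z' [len' ->]]] := word_as_right w z; apply: R_nil; lia.
Qed.

Definition words_span (k : nat) : V -> Prop :=
  zspan (fun v => exists w z, size w = k /\ v = foldr letter z w).

Lemma words_span_letter k p v : words_span k v -> words_span k.+1 (letter p v).
Proof.
apply: (zspan_linear_image (linear_letter p)) => _ [w [z [<- ->]]].
by apply: zspan_gen; exists (p :: w), z.
Qed.

Lemma bracket_in_words xs y : words_span (size xs) (iter_bracket br xs y).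
Proof.
elim: xs => [|x xs IH] /=; first by apply: zspan_gen; exists [::], y.
rewrite -commutator; apply: zspanB.
- exact: (words_span_letter (true, x) IH).
- exact: (words_span_letter (false, x) IH).
Qed.

Lemma lie_nilpotent_of_mult_nilpotent :
  (forall x, nilpotent_map (Lmul m x)) -> (forall x, nilpotent_map (Rmul m x)) ->
  lie_nilpotent br.
Proof.
move=> L_nil R_nil.
have [NL L_prod] := commuting_nilpotent_products (op := Lmul m)
  linearR linearL left_comm L_nil.
have [NR R_prod] := commuting_nilpotent_products (op := Rmul m)
  linearL linearR (fun x y v => right_comm v y x) R_nil.
exists (NL + NR)%N => xs y len.
apply: zspan_eq0 (bracket_in_words xs y) => _ [w [z [w_size ->]]].
by apply: long_word_vanish L_prod R_prod _ _ _; rewrite w_size len.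
Qed.

(* The lower central series: g^(j+1) is spanned by the brackets of length j. *)
Definition lcs (j : nat) : V -> Prop :=
  zspan (fun v => exists xs y, size xs = j /\ v = iter_bracket br xs y).

Lemma lcs0 v : lcs 0 v.
Proof. by apply: zspan_gen; exists [::], v. Qed.

Lemma lcs_bracket j x v : lcs j v -> lcs j.+1 (br x v).
Proof.
apply: (zspan_linear_image (linear_bracket x)) => _ [xs [y [<- ->]]].
by apply: zspan_gen; exists (x :: xs), y.
Qed.

Lemma lcs_eq0 c v : (forall xs y, size xs = c -> iter_bracket br xs y = 0) ->
  lcs c v -> v = 0.
Proof. by move=> c_nil; apply: zspan_eq0 => _ [xs [y [xs_c ->]]]; apply: c_nil. Qed.

Definition derivation (D : V -> V) : Prop :=
  forall x y, D (br x y) = br (D x) y + br x (D y).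

Lemma derivation_lcs D j v : linear D -> derivation D -> lcs j v -> lcs j (D v).
Proof.
move=> lD dD; apply: (zspan_linear_image lD) => _ [xs [y [<- ->]]].
elim: xs => [|x xs IH] /=; first exact: lcs0.
rewrite dD; apply: zspanD; last exact: lcs_bracket.
by apply: zspan_gen; exists (D x :: xs), y.
Qed.

Lemma left_mult_derivation x : derivation (m x).
Proof.
move=> y z; rewrite -!commutator (linear_funB (linearL x)) left_comm (left_comm x z y).
by rewrite right_comm [RHS]addrC addrA subrK.
Qed.

Lemma right_mult_derivation x : derivation (m^~ x).
Proof.
move=> y z; rewrite -!commutator /= (linear_funB (linearR x)).
by rewrite (right_comm y x z) (right_comm z x y) (left_comm z y x) addrA subrK.
Qed.

(* If A and B preserve the lower central series, A - B shifts it by one step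
   and B^n = 0, then A^n shifts it by one step: this follows from
   A^(i+1) - B^(i+1) = A (A^i - B^i) + (A - B) B^i. *)
Lemma lcs_iter_shift (A B : V -> V) n :
  linear A -> (forall j v, lcs j v -> lcs j (A v)) ->
  (forall j v, lcs j v -> lcs j (B v)) ->
  (forall j v, lcs j v -> lcs j.+1 (A v - B v)) -> (forall v, iter n B v = 0) ->
  forall j v, lcs j v -> lcs j.+1 (iter n A v).
Proof.
move=> lA A_lcs B_lcs AB_lcs B_nil j v v_lcs.
suff diff_lcs : forall i, lcs j.+1 (iter i A v - iter i B v).
  by have := diff_lcs n; rewrite B_nil subr0.
elim=> [|i IH] /=; first by rewrite subrr; apply: zspan0.
have -> : A (iter i A v) - B (iter i B v) =
    A (iter i A v - iter i B v) + (A (iter i B v) - B (iter i B v)).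
  by rewrite (linear_funB lA) addrA subrK.
apply: zspanD; first exact: A_lcs.
by apply: AB_lcs; elim: i {IH} => [|i IHi] //=; apply: B_lcs.
Qed.

Lemma nilpotent_of_lcs_shift (A : V -> V) n : lie_nilpotent br ->
  (forall j v, lcs j v -> lcs j.+1 (iter n A v)) -> nilpotent_map A.
Proof.
move=> [c c_nil] A_shift; exists (c * n)%N => v.
suff lcs_iter : forall k, lcs k (iter (k * n) A v) by apply: lcs_eq0 (lcs_iter c).
elim=> [|k IH]; first exact: lcs0.
by rewrite mulSn iterD; apply: A_shift.
Qed.

Lemma right_nilpotent_of_left_lie :
  (forall x, nilpotent_map (Lmul m x)) -> lie_nilpotent br ->
  forall x, nilpotent_map (Rmul m x).
Proof.
move=> L_nil g_nil x; have [n Ln] := L_nil x.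
apply: (nilpotent_of_lcs_shift (n := n)) g_nil _.
apply: (lcs_iter_shift (B := Lmul m x)) Ln => [|j v|j v|j v].
- exact: linearR.
- exact: derivation_lcs (linearR x) (right_mult_derivation x).
- exact: derivation_lcs (linearL x) (left_mult_derivation x).
- by move=> v_lcs; rewrite -opprB commutator; apply/zspanN/lcs_bracket.
Qed.

Lemma left_nilpotent_of_right_lie :
  (forall x, nilpotent_map (Rmul m x)) -> lie_nilpotent br ->
  forall x, nilpotent_map (Lmul m x).
Proof.
move=> R_nil g_nil x; have [n Rn] := R_nil x.
apply: (nilpotent_of_lcs_shift (n := n)) g_nil _.
apply: (lcs_iter_shift (B := Rmul m x)) Rn => [|j v|j v|j v].
- exact: linearL.
- exact: derivation_lcs (linearL x) (left_mult_derivation x).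
- exact: derivation_lcs (linearR x) (right_mult_derivation x).
- by move=> v_lcs; rewrite commutator; apply: lcs_bracket.
Qed.

End LRStructure.

Theorem mainTheorem2 (K : fieldType) (V : vectType K)
  (br m : V -> V -> V) :
  [pchar K] =i pred0 ->
  is_lie_bracket br ->
  is_LR_structure br m ->
  let a := forall x : V, nilpotent_map (Lmul m x) in
  let b := forall x : V, nilpotent_map (Rmul m x) in
  let c := lie_nilpotent br in
  [/\ (a -> b -> c), (a -> c -> b) & (b -> c -> a)].
Proof.
move=> _ _ [[[m_lin1 m_lin2] left_comm right_comm] commutator] a b c.
have linearL x : linear (m x) by move=> k u v; apply: m_lin2.
have linearR x : linear (m^~ x) by move=> k u v; apply: m_lin1.
split.
- exact: (lie_nilpotent_of_mult_nilpotent
            linearL linearR left_comm right_comm commutator).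
- exact: (right_nilpotent_of_left_lie
            linearL linearR left_comm right_comm commutator).
- exact: (left_nilpotent_of_right_lie
            linearL linearR left_comm right_comm commutator).
Qed.
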